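(* Consider the group-based tree model of the context with $G=\mathbb{Z}_2\times\mathbb{Z}_2$ (the Kimura 3-parameter model) on a tree $\mathscr{T}$ with $m\ge3$ leaves all of whose non-leaf vertices have degree at least $3$, with arbitrary real edge parameters $\psi^{(e)}(C),\psi^{(e)}(G),\psi^{(e)}(T)$. For each pendant edge $e$ (leaf $i$, internal endpoint $\nu$) fix leaves $j,k\neq i$ whose connecting path passes through $\nu$ and set, for $h\in\{C,G,T\}$, $$R_e(h)=\frac{q_{w(h,h,A)}\,q_{w(h,A,h)}}{q_{w(A,h,h)}},$$ where $w(a,b,c)$ assigns $a,b,c$ to leaves $i,j,k$ and $A$ to all other leaves. For each internal edge $e$ (endpoints $\nu,\nu'$) fix leaves $i,j$ whose connecting path contains $\nu$ but not $\nu'$ and $i',j'$ whose connecting path contains $\nu'$ but not $\nu$, and set $$R_e(h)=\frac{q_{z(h,A,h,A)}\,q_{z(A,h,A,h)}}{q_{z(h,h,A,A)}\,q_{z(A,A,h,h)}},$$ where $z(a,b,c,d)$ assigns $a,b,c,d$ to $i,j,i',j'$ and $A$ to all other leaves. (All denominators are nonzero.) Then all edge parameters of all edges are non-negative if and only if for every edge $e$ $$R_e(C)R_e(T)\le R_e(G),\qquad R_e(G)R_e(T)\le R_e(C),\qquad R_e(C)R_e(G)\le R_e(T).$$ Moreover, for each edge $e$ these three inequalities are respectively equivalent to $\psi^{(e)}(C)\ge0$, $\psi^{(e)}(G)\ge0$, $\psi^{(e)}(T)\ge0$.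
   Context: Group-based model on a tree. $G=\mathbb{Z}_2\times\mathbb{Z}_2$ is written additively with elements identified as $A=(0,0)$, $C=(1,0)$, $G=(0,1)$, $T=(1,1)$; characters are $\widehat{(a,b)}((c,d))=(-1)^{ac+bd}$. The Fourier transform of $a$ on the group is $\check a(g)=\sum_{h}\hat g(h)a(h)$. $\mathscr{T}$ is a finite tree with $m$ leaves, one of which is designated the root leaf $r$. Each edge $e$ carries a function $\psi^{(e)}$ from the group to $\mathbb{R}$ with $\psi^{(e)}(A)=-(\psi^{(e)}(C)+\psi^{(e)}(G)+\psi^{(e)}(T))$ (the values at $C,G,T$ are the edge parameters); put $Q^{(e)}_{g,h}=\psi^{(e)}(h-g)$, $P^{(e)}=\exp(Q^{(e)})$, $f^{(e)}(h)=P^{(e)}_{A,h}$. Edges are directed away from $r$. For $\mathbf g$ in the $m$-fold product of the group (indexed by leaves, $r$ included), $p_{\mathbf g}=\sum_\sigma\prod_{e=(u\to v)}P^{(e)}_{\sigma(u),\sigma(v)}$, the sum over all maps $\sigma$ from vertices to the group with $\sigma(r)=A$ and $\sigma$ equal to $\mathbf g$ on leaves. Its Fourier transform is $q_{\mathbf g}=\sum_{\mathbf h}\prod_x\hat g_x(h_x)p_{\mathbf h}$. For an edge $e$, $\Lambda(e)$ is the set of leaves whose path to $r$ contains $e$, ${}^*g_e=\sum_{x\in\Lambda(e)}g_x$, and it is known (Hendy; Evans–Speed) that $q_{\mathbf g}=\prod_e\check f^{(e)}({}^*g_e)$. *)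

From Stdlib Require Import Reals Factorial.
From mathcomp Require Import all_boot.
Set Implicit Arguments.
Unset Strict Implicit.
Unset Printing Implicit Defensive.
Local Open Scope R_scope.

Notation grp := (bool * bool)%type.
Definition gA : grp := (false, false).
Definition gC : grp := (true, false).
Definition gG : grp := (false, true).
Definition gT : grp := (true, true).
(* addition (= subtraction) in Z2 x Z2 *)
Definition gadd (x y : grp) : grp := (xorb x.1 y.1, xorb x.2 y.2).
Definition chr (g h : grp) : R :=
  if xorb (g.1 && h.1) (g.2 && h.2) then (-1) else 1.

Definition sumR {X : Type} (s : seq X) (f : X -> R) : R :=
  foldr (fun x acc => f x + acc) 0 s.
Definition prodR {X : Type} (s : seq X) (f : X -> R) : R :=
  foldr (fun x acc => f x * acc) 1 s.

Fixpoint matpow (Q : grp -> grp -> R) (n : nat) : grp -> grp -> R :=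
  match n with
  | O => fun g h => if g == h then 1 else 0
  | S n' => fun g h => sumR (enum {: grp}) (fun k => matpow Q n' g k * Q k h)
  end.

Definition IsMatExp (Q P : grp -> grp -> R) : Prop :=
  forall g h, infinite_sum (fun n => matpow Q n g h / INR (fact n)) (P g h).

Definition Qmat (psi : grp -> R) (g h : grp) : R := psi (gadd h g).

Section Tree.
Variables (V : finType) (par : V -> V) (r : V).

(* par r = r, and every vertex reaches r by following parents:
   V with edges {par v, v} (v <> r) is a finite tree, edges directed
   away from r as (par v -> v).  The edge (par v -> v) is indexed by v. *)
Definition is_tree : Prop :=
  par r = r /\ forall v : V, exists n : nat, iter n par v = r.

Definition children (v : V) : {set V} := [set u | (u != r) && (par u == v)].
Definition deg (v : V) : nat := (#|children v| + (v != r))%N.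
Definition is_leaf (v : V) : bool := deg v == 1%N.

Definition anc (w x : V) : bool := [exists n : 'I_#|V|, iter n par x == w].

Definition on_path (w x y : V) : bool :=
  (anc w x && ~~ anc w y) || (anc w y && ~~ anc w x) ||
  [&& anc w x, anc w y &
      [forall c, ((c != r) && (par c == w)) ==> ~~ (anc c x && anc c y)]].

Definition leafT := {x : V | is_leaf x}.

(* pendant edge (par v -> v); its leaf endpoint i and internal endpoint nu *)
Definition pendant (v : V) : bool := (v != r) && (is_leaf v || (par v == r)).
Definition internal_edge (v : V) : bool := (v != r) && ~~ pendant v.
Definition pend_i (v : V) : V := if par v == r then r else v.
Definition pend_nu (v : V) : V := if par v == r then v else par v.

Definition pprob (P : V -> grp -> grp -> R) (g : {ffun leafT -> grp}) : R :=
  sumR (enum {: {ffun V -> grp}}) (fun s =>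
    if (s r == gA) && [forall x : leafT, s (val x) == g x]
    then prodR (enum {: V}) (fun v => if v == r then 1 else P v (s (par v)) (s v))
    else 0).

Definition qprob (P : V -> grp -> grp -> R) (g : {ffun leafT -> grp}) : R :=
  sumR (enum {: {ffun leafT -> grp}}) (fun h =>
    (prodR (enum {: leafT}) (fun x => chr (g x) (h x)) * pprob P h)).

Definition col3 (i j k : V) (a b c : grp) : {ffun leafT -> grp} :=
  [ffun x : leafT => if val x == i then a else if val x == j then b
                     else if val x == k then c else gA].
Definition col4 (i j i' j' : V) (a b c d : grp) : {ffun leafT -> grp} :=
  [ffun x : leafT => if val x == i then a else if val x == j then b
                     else if val x == i' then c else if val x == j' then d else gA].

Definition R_pend (P : V -> grp -> grp -> R) (i j k : V) (h : grp) : R :=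
  (qprob P (col3 i j k h h gA) * qprob P (col3 i j k h gA h)
   / qprob P (col3 i j k gA h h)).

Definition R_int (P : V -> grp -> grp -> R) (i j i' j' : V) (h : grp) : R :=
  (qprob P (col4 i j i' j' h gA h gA) * qprob P (col4 i j i' j' gA h gA h)
   / (qprob P (col4 i j i' j' h h gA gA) * qprob P (col4 i j i' j' gA gA h h))).

(* R_e(h) for the edge (par v -> v), given the fixed choices of leaves:
   pendant: j = cj v, k = ck v;  internal: i = ci v, j = cj v, i' = ci' v, j' = cj' v,
   where nu = par v and nu' = v. *)
Definition R_edge (P : V -> grp -> grp -> R) (ci cj ck ci' cj' : V -> V)
    (v : V) (h : grp) : R :=
  if pendant v then R_pend P (pend_i v) (cj v) (ck v) h
  else R_int P (ci v) (cj v) (ci' v) (cj' v) h.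

Definition good_choice (ci cj ck ci' cj' : V -> V) : Prop :=
  (forall v, pendant v ->
     [/\ is_leaf (cj v), is_leaf (ck v), cj v != pend_i v, ck v != pend_i v
       & on_path (pend_nu v) (cj v) (ck v)]) /\
  (forall v, internal_edge v ->
     [/\ is_leaf (ci v) && is_leaf (cj v), is_leaf (ci' v) && is_leaf (cj' v),
         on_path (par v) (ci v) (cj v) && ~~ on_path v (ci v) (cj v)
       & on_path v (ci' v) (cj' v) && ~~ on_path (par v) (ci' v) (cj' v)]).

End Tree.

From HB Require Import structures.
From Stdlib Require Import Reals Factorial Lra.
From mathcomp Require Import all_boot.

(* 1. Fourier analysis on Z2 x Z2: the rate matrix Q_{g,h} = psi(h - g) is
      diagonalized by the characters, so P = exp(Q) has entries
      P_{g,h} = trans_fun psi (g + h), where trans_fun psi has Fourier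
      transform exp (fourier psi) (matexp_fourier).
   2. Hendy's formula: after the change of variables from vertex labelings to
      edge increments (labeling_bij) the sum defining q_g factorizes, giving
      q_g = exp (sum_e fourier psi_e ( *g_e )) (hendy_formula).
   3. Tree combinatorics: for the leaves chosen for an edge e, every other edge
      splits them in a pattern whose contributions cancel in the ratio R_e
      (pendant_split, internal_split_pattern), so that
      R_e(h) = exp (2 fourier psi_e h) (R_edge_exp).
   4. As fourier psi C = -2 (psi C + psi T), etc., the inequality
      R_e(C) R_e(T) <= R_e(G) says psi_e(C) >= 0, and similarly for G and T
      (kimura_criterion).  The main theorem combines 1, 3 and 4. *)

Set Implicit Arguments.
Unset Strict Implicit.
Unset Printing Implicit Defensive.
Local Open Scope R_scope.

HB.instance Definition _ := Monoid.isComLaw.Build R 0 Rplus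
  (fun x y z => esym (Rplus_assoc x y z)) Rplus_comm Rplus_0_l.
HB.instance Definition _ := Monoid.isComLaw.Build R 1 Rmult
  (fun x y z => esym (Rmult_assoc x y z)) Rmult_comm Rmult_1_l.
HB.instance Definition _ := Monoid.isMulLaw.Build R 0 Rmult Rmult_0_l Rmult_0_r.
HB.instance Definition _ := Monoid.isAddLaw.Build R Rmult Rplus
  Rmult_plus_distr_r Rmult_plus_distr_l.

Lemma sumR_big (X : Type) (s : seq X) (f : X -> R) :
  sumR s f = \big[Rplus/0]_(x <- s) f x.
Proof. by elim: s => [|x s IH]; rewrite ?big_nil ?big_cons //= IH. Qed.

Lemma prodR_big (X : Type) (s : seq X) (f : X -> R) :
  prodR s f = \big[Rmult/1]_(x <- s) f x.
Proof. by elim: s => [|x s IH]; rewrite ?big_nil ?big_cons //= IH. Qed.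

Lemma sumR_enum (T : finType) (f : T -> R) :
  sumR (enum T) f = \big[Rplus/0]_(x : T) f x.
Proof. by rewrite sumR_big big_enum; apply: eq_bigl => x; rewrite inE. Qed.

Lemma prodR_enum (T : finType) (f : T -> R) :
  prodR (enum T) f = \big[Rmult/1]_(x : T) f x.
Proof. by rewrite prodR_big big_enum; apply: eq_bigl => x; rewrite inE. Qed.

Lemma gaddA : associative gadd. Proof. by case=> [[] []] [[] []] [[] []]. Qed.
Lemma gaddC : commutative gadd. Proof. by case=> [[] []] [[] []]. Qed.
Lemma gadd0g : left_id gA gadd. Proof. by case=> [[] []]. Qed.
HB.instance Definition _ := Monoid.isComLaw.Build grp gA gadd gaddA gaddC gadd0g.

Lemma gaddg0 : right_id gA gadd. Proof. by case=> [[] []]. Qed.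
Lemma gaddgg a : gadd a a = gA. Proof. by case: a => [[] []]. Qed.
Lemma gaddgK b a : gadd (gadd a b) b = a. Proof. by case: a b => [[] []] [[] []]. Qed.
Lemma gaddKg b a : gadd b (gadd a b) = a. Proof. by case: a b => [[] []] [[] []]. Qed.

Lemma sum_grp (F : grp -> R) :
  \big[Rplus/0]_(a : grp) F a = F gA + F gC + F gG + F gT.
Proof.
rewrite (eq_bigr (fun p : grp => F (p.1, p.2))); last by case.
rewrite -(pair_big xpredT xpredT (fun a b => F (a, b))) /= !big_bool /=.
by rewrite /gA /gC /gG /gT; ring.
Qed.

Lemma chrC k a : chr k a = chr a k.
Proof. by case: k a => [[] []] [[] []]. Qed.
Lemma chr_g0 k : chr k gA = 1. Proof. by case: k => [[] []]. Qed.
Lemma chr_0g k : chr gA k = 1. Proof. by case: k => [[] []]. Qed.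
Lemma chrD k a b : chr k (gadd a b) = chr k a * chr k b.
Proof. by case: k a b => [[] []] [[] []] [[] []]; rewrite /chr /=; ring. Qed.
Lemma chrDl k a b : chr (gadd a b) k = chr a k * chr b k.
Proof. by rewrite chrC chrD !(chrC k). Qed.

Definition fourier (f : grp -> R) (k : grp) : R :=
  \big[Rplus/0]_(a : grp) (chr k a * f a).
Definition fourier_inv (u : grp -> R) (d : grp) : R :=
  / 4 * \big[Rplus/0]_(k : grp) (chr k d * u k).

Lemma fourier_invK (u : grp -> R) k : fourier (fourier_inv u) k = u k.
Proof.
rewrite /fourier /fourier_inv sum_grp !sum_grp.
by case: k => [[] []]; rewrite /chr /gA /gC /gG /gT /=; field.
Qed.

(* The transition function of an edge with parameters f: the function
   h |-> P_{A,h}, whose Fourier transform is exp (fourier f)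
   (see matexp_fourier). *)
Definition trans_fun (f : grp -> R) : grp -> R :=
  fourier_inv (fun k => exp (fourier f k)).

Lemma isum_ext (u v : nat -> R) l :
  (forall n, u n = v n) -> infinite_sum u l -> infinite_sum v l.
Proof.
move=> E H eps He; have [N HN] := H eps He; exists N => n Hn.
by rewrite -(PartSum.sum_eq u v n) => [|i _]; [exact: HN | apply: E].
Qed.

Lemma isum_scal (u : nat -> R) a l :
  infinite_sum u l -> infinite_sum (fun n => a * u n) (a * l).
Proof.
move=> H; have Ha : Un_cv (fun n => a * sum_f_R0 u n) (a * l).
  apply: CV_mult => // eps He; exists 0%nat => n _.
  by rewrite /Rdist Rminus_diag Rabs_R0.
move=> eps He; have [N HN] := Ha eps He; exists N => n Hn.
have -> : sum_f_R0 (fun k => a * u k) n = a * sum_f_R0 u n.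
  by rewrite scal_sum; apply: PartSum.sum_eq => i _; ring.
exact: HN.
Qed.

Lemma isum_plus (u v : nat -> R) lu lv :
  infinite_sum u lu -> infinite_sum v lv ->
  infinite_sum (fun n => u n + v n) (lu + lv).
Proof.
move=> Hu Hv; have Huv := CV_plus _ _ _ _ Hu Hv.
move=> eps He; have [N HN] := Huv eps He; exists N => n Hn.
by rewrite sum_plus; exact: HN.
Qed.

Lemma isum_big (I : Type) (s : seq I) (u : I -> nat -> R) (l : I -> R) :
  (forall i, infinite_sum (u i) (l i)) ->
  infinite_sum (fun n => \big[Rplus/0]_(i <- s) u i n) (\big[Rplus/0]_(i <- s) l i).
Proof.
move=> H; elim: s => [|i s IH].
  apply: (isum_ext (u := fun _ => 0)) => [n|]; first by rewrite big_nil.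
  move=> eps He; exists 0%nat => n _.
  by rewrite big_nil sum_cte Rmult_0_l /Rdist Rminus_diag Rabs_R0.
rewrite big_cons; apply: (isum_ext (u := fun n => u i n + \big[Rplus/0]_(j <- s) u j n)).
  by move=> n; rewrite big_cons.
exact: isum_plus.
Qed.

(* The rate matrix Q_{g,h} = f(h - g) is diagonalized by the characters:
   its powers are Q^n_{g,h} = fourier_inv (fourier f ^ n) (g + h). *)
Lemma matpow_fourier f n g h :
  matpow (Qmat f) n g h = fourier_inv (fun k => fourier f k ^ n) (gadd g h).
Proof.
elim: n g h => [|n IH] g h /=.
  rewrite /fourier_inv sum_grp; case: g h => [[] []] [[] []]; rewrite /chr /=; lra.
rewrite sumR_enum sum_grp !IH /fourier_inv /fourier !sum_grp /Qmat.
by case: g h => [[] []] [[] []]; rewrite /chr /gadd /gA /gC /gG /gT /=; ring.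
Qed.

(* Hence P = exp(Q) has entries P_{g,h} = trans_fun f (g + h), by summing
   the exponential series in each eigenspace. *)
Lemma matexp_fourier f P :
  IsMatExp (Qmat f) P -> forall g h, P g h = trans_fun f (gadd g h).
Proof.
move=> HP g h; rewrite /trans_fun; set d := gadd g h.
apply: (uniqueness_sum _ _ _ (HP g h)).
have Hexp x : infinite_sum (fun n => / INR (fact n) * x ^ n) (exp x).
  exact: (proj2_sig (exist_exp x)).
apply: (isum_ext (u := fun n => / 4 * \big[Rplus/0]_(k : grp)
           (chr k d * (/ INR (fact n) * fourier f k ^ n)))).
  move=> n; rewrite matpow_fourier /fourier_inv -/d /Rdiv Rmult_assoc big_distrl /=.
  by congr (_ * _); apply: eq_bigr => k _; ring.
by apply: isum_scal; apply: isum_big => k; apply: isum_scal; apply: Hexp.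
Qed.

Section Ancestors.
Variables (V : finType) (par : V -> V).
Local Notation anc := (anc par).

Lemma ancP w x : reflect (exists n, iter n par x = w) (anc w x).
Proof.
apply: (iffP existsP) => [[n /eqP <-]|[n Hn]]; first by exists n.
have Hc : fconnect par x w by rewrite -Hn; apply: fconnect_iter.
have Hlt : (findex par x w < #|V|)%N by apply: leq_trans (findex_max Hc) (max_card _).
by exists (Ordinal Hlt); rewrite /= iter_findex.
Qed.

Lemma anc_refl x : anc x x. Proof. by apply/ancP; exists 0%N. Qed.
Lemma anc_par x : anc (par x) x. Proof. by apply/ancP; exists 1%N. Qed.

Lemma anc_trans a b c : anc a b -> anc b c -> anc a c.
Proof.
by move=> /ancP[n Hn] /ancP[m Hm]; apply/ancP; exists (n + m)%N; rewrite iterD Hm.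
Qed.

Lemma anc_total a b x : anc a x -> anc b x -> anc a b || anc b a.
Proof.
move=> /ancP[n <-] /ancP[m <-]; case: (leqP n m) => H; apply/orP.
  by right; apply/ancP; exists (m - n)%N; rewrite -iterD subnK.
by left; apply/ancP; exists (n - m)%N; rewrite -iterD subnK // ltnW.
Qed.

Lemma anc_step w v : anc w v = (w == v) || anc w (par v).
Proof.
apply/idP/idP => [/ancP[[|n] Hn]|/orP[/eqP ->|H]].
- by rewrite -Hn eqxx.
- by apply/orP; right; apply/ancP; exists n; rewrite -iterSr.
- exact: anc_refl.
- exact: anc_trans H (anc_par v).
Qed.

Lemma anc_strict a v : anc a v -> a != v -> anc a (par v).
Proof. by rewrite anc_step => /orP[/eqP ->|//]; rewrite eqxx. Qed.
End Ancestors.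

Section RootedTree.
Variables (V : finType) (par : V -> V) (r : V).
Hypothesis tree : is_tree par r.
Local Notation anc := (anc par).

Lemma iter_root n : iter n par r = r.
Proof. by elim: n => //= n ->; case: tree. Qed.

Lemma anc_root x : anc r x.
Proof. by case: tree => _ /(_ x) [n Hn]; apply/ancP; exists n. Qed.

Lemma anc_to_root w : anc w r -> w = r.
Proof. by move=> /ancP[n]; rewrite iter_root. Qed.

Lemma par_cycle_root v n : iter n.+1 par v = v -> v = r.
Proof.
move=> Hv; case: tree => _ /(_ v) [k Hk].
have Hmul m : iter (m * n.+1) par v = v by elim: m => // m IH; rewrite mulSn iterD IH.
by have := Hmul k; rewrite mulnS addnC iterD Hk iter_root.
Qed.

Lemma anc_antisym a b : anc a b -> anc b a -> a = b.
Proof.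
move=> /ancP[[|n] Hn] /ancP[m Hm]; first by rewrite -Hn.
have : iter (n.+1 + m) par a = a by rewrite iterD Hm.
by rewrite addSn => /par_cycle_root Ha; move: Hm; rewrite Ha iter_root.
Qed.

Lemma anc_par_not_child v : v != r -> ~~ anc v (par v).
Proof.
move=> Hv; apply/negP => H; have E := anc_antisym H (anc_par par v).
by move: Hv; rewrite (par_cycle_root (n := 0) (esym E)) eqxx.
Qed.

Lemma anc_child a b : anc a b -> a != b ->
  exists c, [/\ c != r, par c = a & anc c b].
Proof.
move=> /ancP Hex Hab.
have Hex' : exists n, iter n par b == a by case: Hex => n Hn; exists n; apply/eqP.
case: (ex_minnP Hex') => -[|n] /eqP Hn Hmin; first by rewrite -Hn eqxx in Hab.
exists (iter n par b); split=> //; last by apply/ancP; exists n.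
apply/eqP => Hr; have Har : a = r by rewrite -Hn /= Hr; case: tree.
by have := Hmin n; rewrite Hr Har eqxx ltnn => /(_ isT).
Qed.

Lemma sibling_uniq c v x : c != r -> v != r -> par c = par v ->
  anc c x -> anc v x -> c = v.
Proof.
move=> Hc Hv Hp Hcx Hvx; apply/eqP; apply/negPn/negP => Hne.
case/orP: (anc_total Hcx Hvx) => H.
- by have := anc_strict H Hne; rewrite -Hp (negbTE (anc_par_not_child Hc)).
- rewrite eq_sym in Hne.
  by have := anc_strict H Hne; rewrite Hp (negbTE (anc_par_not_child Hv)).
Qed.

Lemma leaf_no_child x c : is_leaf par r x -> x != r -> c != r -> par c != x.
Proof.
rewrite /is_leaf /deg => Hl Hx Hc; apply/eqP => E.
move: Hl; rewrite Hx addn1 eqSS => /eqP/cards0_eq H.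
have : c \in children par r x by rewrite inE Hc E eqxx.
by rewrite H inE.
Qed.

Lemma leaf_anc x y : is_leaf par r x -> x != r -> anc x y -> y = x.
Proof.
move=> Hl Hx Ha; apply/eqP; rewrite eq_sym; apply/negPn/negP => Hne.
have [c [Hc Hpc _]] := anc_child Ha Hne.
by move: (leaf_no_child Hl Hx Hc); rewrite Hpc eqxx.
Qed.

Lemma on_path_sym w x y : on_path par r w x y = on_path par r w y x.
Proof.
rewrite /on_path; case: (anc w x); case: (anc w y) => //=.
by apply: eq_forallb => c; rewrite [anc c x && _]andbC.
Qed.

Lemma on_path_anc w x y : on_path par r w x y -> anc w x || anc w y.
Proof. by rewrite /on_path; case: (anc w x); case: (anc w y). Qed.

Lemma on_path_lca w x y : on_path par r w x y -> anc w x -> anc w y ->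
  forall c, c != r -> par c = w -> ~~ (anc c x && anc c y).
Proof.
rewrite /on_path => + Hx Hy; rewrite Hx Hy /= => /forallP H c Hc Hpc.
by have := H c; rewrite Hc Hpc eqxx.
Qed.

Lemma on_path_sep w x y : anc w x -> ~~ anc w y -> on_path par r w x y.
Proof. by rewrite /on_path => -> ->. Qed.

Lemma on_path_lcaI w x y : anc w x -> anc w y ->
  (forall c, c != r -> par c = w -> ~~ (anc c x && anc c y)) -> on_path par r w x y.
Proof.
move=> Hx Hy H; rewrite /on_path Hx Hy /=; apply/forallP => c.
by apply/implyP => /andP[Hc /eqP Hpc]; apply: H.
Qed.

Lemma on_path_self w x : on_path par r w x x -> w = x.
Proof.
move=> H; have Hx : anc w x by have := on_path_anc H; rewrite orbb.
apply/eqP; apply/negPn/negP => Hne; have [c [Hc Hpc Hcx]] := anc_child Hx Hne.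
by have := on_path_lca H Hx Hx Hc Hpc; rewrite Hcx.
Qed.

(* Every common ancestor w of two vertices is an ancestor of every vertex p
   of the path between them (the path hangs below their lowest common
   ancestor). *)
Lemma on_path_below p x y w : on_path par r p x y -> anc w x -> anc w y -> anc w p.
Proof.
move=> Hop Hx Hy.
have [Hpw|//] : anc p w \/ anc w p.
  by case/orP: (on_path_anc Hop) => H; apply/orP;
    [apply: anc_total Hx | apply: anc_total Hy].
case: (eqVneq p w) => [->|Hne]; first exact: anc_refl.
have [c [Hc Hpc Hcw]] := anc_child Hpw Hne.
have := on_path_lca Hop (anc_trans Hpw Hx) (anc_trans Hpw Hy) Hc Hpc.
by rewrite (anc_trans Hcw Hx) (anc_trans Hcw Hy).
Qed.

Lemma on_path_below_edge v x y : v != r -> on_path par r v x y ->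
  ~~ on_path par r (par v) x y -> anc v x && anc v y.
Proof.
move=> Hv; have side a b : anc v a -> ~~ on_path par r (par v) a b -> anc v b.
  move=> Ha Hn; case Hb : (anc v b) => //; case/negP: Hn.
  have Hpa := anc_trans (anc_par par v) Ha.
  case Hpb : (anc (par v) b); last by apply: on_path_sep; rewrite ?Hpb.
  apply: on_path_lcaI => // c Hc Hpc; apply/negP => /andP[Hca Hcb].
  by move: Hb; rewrite -(sibling_uniq Hc Hv Hpc Hca Ha) Hcb.
move=> Hop Hn; case/orP: (on_path_anc Hop) => Ha; first by rewrite Ha (side _ _ Ha Hn).
by rewrite on_path_sym in Hn; rewrite Ha andbT (side _ _ Ha Hn).
Qed.

Lemma on_path_above_edge v x y : v != r -> on_path par r (par v) x y ->
  ~~ on_path par r v x y -> ~~ anc v x && ~~ anc v y.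
Proof.
move=> Hv; have side a b :
    on_path par r (par v) a b -> ~~ on_path par r v a b -> ~~ anc v a.
  move=> H Hn; apply/negP => Ha; have Hpv := anc_par par v.
  case Hb : (anc v b); last by apply: (negP Hn); apply: on_path_sep; rewrite ?Hb.
  have := on_path_lca H (anc_trans Hpv Ha) (anc_trans Hpv Hb) Hv erefl.
  by rewrite Ha Hb.
move=> Hop Hn; rewrite (side _ _ Hop Hn).
by rewrite on_path_sym in Hop; rewrite on_path_sym in Hn; rewrite (side _ _ Hop Hn).
Qed.
End RootedTree.

Section HendyFormula.
Variables (V : finType) (par : V -> V) (r : V).
Hypothesis tree : is_tree par r.
Variables (psi : V -> grp -> R) (P : V -> grp -> grp -> R).
Hypothesis P_trans : forall v, v != r -> forall x y, P v x y = trans_fun (psi v) (gadd x y).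
Local Notation anc := (anc par).
Local Notation leaf := (leafT par r).

Definition labeling (d : {ffun V -> grp}) : {ffun V -> grp} :=
  [ffun v => \big[gadd/gA]_(w | anc w v) d w].
Definition increments (s : {ffun V -> grp}) : {ffun V -> grp} :=
  [ffun v => if v == r then s r else gadd (s v) (s (par v))].

Lemma labeling_root d : labeling d r = d r.
Proof.
rewrite ffunE (big_pred1 r) // => w.
by apply/idP/eqP => [/anc_to_root ->|->] //; apply: anc_refl.
Qed.

Lemma labeling_step d v : v != r -> labeling d v = gadd (d v) (labeling d (par v)).
Proof.
move=> Hv; rewrite !ffunE (bigD1 v) ?anc_refl //=; congr gadd; apply: eq_bigl => w.
rewrite anc_step; case: (eqVneq w v) => [->|_] /=; last by rewrite andbT.
by rewrite (negbTE (anc_par_not_child tree Hv)).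
Qed.

Lemma labeling_bij : bijective labeling.
Proof.
exists increments => [d|s]; apply/ffunP => v.
  rewrite [LHS]ffunE; case: (eqVneq v r) => [->|Hv]; first by rewrite labeling_root.
  by rewrite labeling_step // gaddgK.
case: tree => _ /(_ v) [n]; elim: n v => [|n IH] v /= Hn.
  by rewrite Hn labeling_root ffunE eqxx.
case: (eqVneq v r) => [->|Hv]; first by rewrite labeling_root ffunE eqxx.
by rewrite labeling_step // IH -?iterSr // ffunE (negbTE Hv) gaddgK.
Qed.

(* [leaf_sum g w] is the paper's *g_e for the edge e = (par w -> w): the sum
   of the labels g at the leaves below w. *)
Definition leaf_sum (g : {ffun leaf -> grp}) (w : V) : grp :=
  \big[gadd/gA]_(x : leaf | anc w (val x)) g x.

Definition weight (s : {ffun V -> grp}) : R :=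
  \big[Rmult/1]_(v : V) (if v == r then 1 else P v (s (par v)) (s v)).

Lemma qprob_vertex_sum g : qprob P g =
  \big[Rplus/0]_(s : {ffun V -> grp})
    (if s r == gA then (\big[Rmult/1]_(x : leaf) chr (g x) (s (val x))) * weight s
     else 0).
Proof.
rewrite /qprob sumR_enum.
under eq_bigr => h _ do rewrite prodR_enum /pprob sumR_enum big_distrr.
rewrite exchange_big /=; apply: eq_bigr => s _.
rewrite (bigD1 [ffun x : leaf => s (val x)]) //= [X in _ + X]big1 ?Rplus_0_r; last first.
  move=> h /eqP Hh; case: ifP => [/andP[_ /forallP H]|_]; last by rewrite Rmult_0_r.
  by case: Hh; apply/ffunP => x; rewrite ffunE; apply/esym/eqP.
have -> : [forall x : leaf, s (val x) == [ffun x0 : leaf => s (val x0)] x].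
  by apply/forallP => x; rewrite ffunE.
rewrite andbT prodR_enum; case: (s r == gA); last by rewrite Rmult_0_r.
by under eq_bigr => x _ do rewrite ffunE.
Qed.

Definition edge_factor (g : {ffun leaf -> grp}) (w : V) (a : grp) : R :=
  if w == r then (if a == gA then 1 else 0)
  else chr (leaf_sum g w) a * trans_fun (psi w) a.

Lemma chr_labeling (g : {ffun leaf -> grp}) d :
  \big[Rmult/1]_(x : leaf) chr (g x) (labeling d (val x)) =
  \big[Rmult/1]_(w : V) chr (leaf_sum g w) (d w).
Proof.
rewrite (eq_bigr (fun x => \big[Rmult/1]_(w | anc w (val x)) chr (g x) (d w))); last first.
  by move=> x _; rewrite ffunE (big_morph (chr (g x)) (chrD _) (chr_g0 _)).
rewrite (exchange_big_dep xpredT) //=; apply: eq_bigr => w _.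
by rewrite /leaf_sum (big_morph (chr^~ (d w)) (fun a b => chrDl (d w) a b) (chr_0g _)).
Qed.

(* After the change of variables s = labeling d the summand factorizes. *)
Lemma qprob_increment_sum g : qprob P g =
  \big[Rplus/0]_(d : {ffun V -> grp}) \big[Rmult/1]_(w : V) edge_factor g w (d w).
Proof.
rewrite qprob_vertex_sum (reindex labeling (onW_bij _ labeling_bij)).
apply: eq_bigr => d _; rewrite labeling_root chr_labeling.
have -> : weight (labeling d) =
          \big[Rmult/1]_(w : V) (if w == r then 1 else trans_fun (psi w) (d w)).
  apply: eq_bigr => w _; case: eqP => // /eqP Hw.
  by rewrite P_trans // (labeling_step d Hw) gaddKg.
case: eqP => Hdr; last first.
  by rewrite (bigD1 r) //= /edge_factor eqxx; case: eqP; rewrite // Rmult_0_l.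
rewrite -big_split /=; apply: eq_bigr => w _; rewrite /edge_factor.
by case: eqP => [->|//]; rewrite Hdr eqxx chr_g0 Rmult_1_r.
Qed.

Theorem hendy_formula g : qprob P g =
  exp (\big[Rplus/0]_(w | w != r) fourier (psi w) (leaf_sum g w)).
Proof.
rewrite qprob_increment_sum -bigA_distr_bigA (bigD1 r) //=.
rewrite (big_morph exp exp_plus exp_0).
have -> : \big[Rplus/0]_(a : grp) edge_factor g r a = 1.
  by rewrite sum_grp /edge_factor eqxx /gA /gC /gG /gT /=; ring.
rewrite Rmult_1_l; apply: eq_bigr => w Hw.
by rewrite /edge_factor (negbTE Hw) -[RHS](fourier_invK (fun k => exp (fourier (psi w) k))).
Qed.
End HendyFormula.

(* Boolean patterns describing how an edge splits a set of leaves: the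
   arguments say which leaves lie below the edge. *)
Definition odd_one_out (a b c : bool) : bool := (a && ~~ b && ~~ c) || (~~ a && b && c).
Definition pairs_split (a b c d : bool) : bool := [&& a == b, c == d & a != c].
Definition pairs_cross (a b c d : bool) : bool := [&& a != b, c != d & a == c].

Definition sel (b : bool) (a : grp) : grp := if b then a else gA.

(* Per-edge contributions to log R_e for the three-leaf ratio and the
   four-leaf ratio: they vanish unless the edge splits the leaves in the
   pattern of e itself.  Here F stands for a Fourier transform with F A = 0. *)
Lemma three_leaf_term (F : grp -> R) h a b c : F gA = 0 ->
  F (gadd (gadd (sel a h) (sel b h)) (sel c gA))
  + F (gadd (gadd (sel a h) (sel b gA)) (sel c h))
  - F (gadd (gadd (sel a gA) (sel b h)) (sel c h))
  = if odd_one_out a b c then 2 * F h else 0.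
Proof.
by move=> F0; case: a; case: b; case: c; rewrite /sel /= ?gadd0g ?gaddg0 ?gaddgg ?F0; ring.
Qed.

Lemma four_leaf_term (F : grp -> R) h a b c d : F gA = 0 ->
  F (gadd (gadd (gadd (sel a h) (sel b gA)) (sel c h)) (sel d gA))
  + F (gadd (gadd (gadd (sel a gA) (sel b h)) (sel c gA)) (sel d h))
  - F (gadd (gadd (gadd (sel a h) (sel b h)) (sel c gA)) (sel d gA))
  - F (gadd (gadd (gadd (sel a gA) (sel b gA)) (sel c h)) (sel d h))
  = if pairs_split a b c d then 2 * F h
    else if pairs_cross a b c d then - 2 * F h else 0.
Proof.
by move=> F0; case: a; case: b; case: c; case: d;
  rewrite /sel /= ?gadd0g ?gaddg0 ?gaddgg ?F0; ring.
Qed.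

Section LeafSums.
Variables (V : finType) (par : V -> V) (r : V).
Local Notation anc := (anc par).

Lemma leaf_sum_single (i : V) (Hi : is_leaf par r i) w a :
  \big[gadd/gA]_(x : leafT par r | anc w (val x)) sel (val x == i) a = sel (anc w i) a.
Proof.
rewrite big_mkcond
  (eq_bigr (fun x : leafT par r => if val x == i then sel (anc w i) a else gA)).
  by rewrite -big_mkcond (big_pred1 (exist _ i Hi)).
by move=> x _; case: eqP => [->|_]; rewrite /sel //; case: ifP.
Qed.

Lemma leaf_sum_col3 i j k a b c w :
  is_leaf par r i -> is_leaf par r j -> is_leaf par r k -> uniq [:: i; j; k] ->
  leaf_sum (col3 par r i j k a b c) w =
  gadd (gadd (sel (anc w i) a) (sel (anc w j) b)) (sel (anc w k) c).
Proof.
move=> Hi Hj Hk; rewrite /= !inE !negb_or andbT => /andP[/andP[Hij Hik] Hjk].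
rewrite /leaf_sum (eq_bigr (fun x : leafT par r => gadd (gadd
  (sel (val x == i) a) (sel (val x == j) b)) (sel (val x == k) c))); last first.
  move=> x _; rewrite ffunE /sel; case: (eqVneq (val x) i) => [->|Ni].
    by rewrite ?eqxx (negbTE Hij) (negbTE Hik) !gaddg0.
  case: (eqVneq (val x) j) Ni => [->|Nj] Ni.
    by rewrite ?(negbTE Ni) ?eqxx (negbTE Hjk) gaddg0 gadd0g.
  by case: (eqVneq (val x) k) Ni Nj => [->|Nk] Ni Nj;
    rewrite ?(negbTE Ni) ?(negbTE Nj) ?eqxx !gadd0g.
by rewrite !big_split /= !leaf_sum_single.
Qed.

Lemma leaf_sum_col4 i j k l a b c d w :
  is_leaf par r i -> is_leaf par r j -> is_leaf par r k -> is_leaf par r l ->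
  uniq [:: i; j; k; l] ->
  leaf_sum (col4 par r i j k l a b c d) w =
  gadd (gadd (gadd (sel (anc w i) a) (sel (anc w j) b)) (sel (anc w k) c)) (sel (anc w l) d).
Proof.
move=> Hi Hj Hk Hl; rewrite /= !inE !negb_or andbT.
move=> /and3P[/and3P[Hij Hik Hil] /andP[Hjk Hjl] Hkl].
rewrite /leaf_sum (eq_bigr (fun x : leafT par r => gadd (gadd (gadd (sel (val x == i) a)
  (sel (val x == j) b)) (sel (val x == k) c)) (sel (val x == l) d))); last first.
  move=> x _; rewrite ffunE /sel; case: (eqVneq (val x) i) => [->|Ni].
    by rewrite ?eqxx (negbTE Hij) (negbTE Hik) (negbTE Hil) !gaddg0.
  case: (eqVneq (val x) j) Ni => [->|Nj] Ni.
    by rewrite ?(negbTE Ni) ?eqxx (negbTE Hjk) (negbTE Hjl) !gaddg0 gadd0g.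
  case: (eqVneq (val x) k) Ni Nj => [->|Nk] Ni Nj.
    by rewrite ?(negbTE Ni) ?(negbTE Nj) ?eqxx (negbTE Hkl) gaddg0 !gadd0g.
  by case: (eqVneq (val x) l) Ni Nj Nk => [->|Nl] Ni Nj Nk;
    rewrite ?(negbTE Ni) ?(negbTE Nj) ?(negbTE Nk) ?eqxx !gadd0g.
by rewrite !big_split /= !leaf_sum_single.
Qed.
End LeafSums.

Section EdgeSplits.
Variables (V : finType) (par : V -> V) (r : V).
Hypothesis tree : is_tree par r.
Hypothesis root_leaf : is_leaf par r r.
Local Notation anc := (anc par).
Local Notation leaf := (is_leaf par r).

Lemma root_child_uniq c c' : c != r -> par c = r -> c' != r -> par c' = r -> c = c'.
Proof.
move: root_leaf; rewrite /is_leaf /deg eqxx addn0 => /cards1P[c0 H] Hc Hpc Hc' Hpc'.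
have : c \in children par r r by rewrite inE Hc Hpc eqxx.
have : c' \in children par r r by rewrite inE Hc' Hpc' eqxx.
by rewrite H !inE => /eqP -> /eqP ->.
Qed.

Lemma root_child_anc v x : v != r -> par v = r -> x != r -> anc v x.
Proof.
move=> Hv Hpv Hx; have Hne : r != x by rewrite eq_sym.
have [c [Hc Hpc Hcx]] := anc_child tree (anc_root tree x) Hne.
by rewrite (root_child_uniq Hv Hpv Hc Hpc).
Qed.

Lemma root_pendant_split v j k : v != r -> par v = r -> leaf j ->
  j != r -> k != r -> on_path par r v j k -> (3 <= #|[pred x | leaf x]|)%N ->
  j != k /\ forall w, w != r -> odd_one_out (anc w r) (anc w j) (anc w k) = (w == v).
Proof.
move=> Hv Hpv Hlj Hj Hk Hop H3; split.
  apply/eqP => Ejk; rewrite -Ejk in Hop; have Evj := on_path_self tree Hop.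
  have Hvl : leaf v by rewrite Evj.
  have only2 x : (x == r) || (x == v).
    case: (eqVneq x r) => //= Hx.
    by rewrite (leaf_anc tree Hvl Hv (root_child_anc Hv Hpv Hx)).
  have : (#|[pred x | leaf x]| <= #|pred2 r v|)%N.
    by apply: subset_leq_card; apply/subsetP => x _; rewrite inE /= only2.
  by rewrite card2 => /(leq_trans H3); case: (r != v).
move=> w Hw; have -> : anc w r = false.
  by apply: contraNF Hw => /(anc_to_root tree) ->.
rewrite /odd_one_out /=; case: (eqVneq w v) => [->|Hwv].
  by rewrite !root_child_anc.
apply/negP => /andP[Hwj Hwk]; have Hwv' := on_path_below tree Hop Hwj Hwk.
by rewrite (anc_antisym tree Hwv' (root_child_anc Hv Hpv Hw)) eqxx in Hwv.
Qed.

Lemma leaf_pendant_split v j k : v != r -> par v != r -> leaf v -> leaf j ->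
  j != v -> k != v -> on_path par r (par v) j k ->
  j != k /\ forall w, w != r -> odd_one_out (anc w v) (anc w j) (anc w k) = (w == v).
Proof.
move=> Hv Hpv Hlv Hlj Hjv Hkv Hop; split.
  apply/eqP => Ejk; rewrite -Ejk in Hop; have Epj := on_path_self tree Hop.
  have Hjr : j != r by rewrite -Epj.
  by have := leaf_no_child Hlj Hjr Hv; rewrite Epj eqxx.
have below_v x : x != v -> anc v x = false.
  by move=> Hx; apply: contraNF Hx => /(leaf_anc tree Hlv Hv) ->.
move=> w Hw; rewrite /odd_one_out; case: (eqVneq w v) => [->|Hwv].
  by rewrite anc_refl !below_v.
case Hwv' : (anc w v) => /=.
  have Hwp := anc_strict Hwv' Hwv.
  by case/orP: (on_path_anc Hop) => /(anc_trans Hwp) ->; rewrite ?andbF.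
apply/negP => /andP[Hwj Hwk]; move: (on_path_below tree Hop Hwj Hwk) => Hwp.
by rewrite (anc_trans Hwp (anc_par par v)) in Hwv'.
Qed.

Lemma pendant_split v j k : pendant par r v -> leaf j -> leaf k ->
  j != pend_i par r v -> k != pend_i par r v ->
  on_path par r (pend_nu par r v) j k -> (3 <= #|[pred x | leaf x]|)%N ->
  [/\ leaf (pend_i par r v), uniq [:: pend_i par r v; j; k] &
    forall w, w != r ->
      odd_one_out (anc w (pend_i par r v)) (anc w j) (anc w k) = (w == v)].
Proof.
rewrite /pendant /pend_i /pend_nu => /andP[Hv Hpend] Hj Hk Hji Hki Hop H3.
case: (eqVneq (par v) r) => Hpv /= in Hji Hki Hop *.
  have [Hjk Hsplit] := root_pendant_split Hv Hpv Hj Hji Hki Hop H3.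
  by split; rewrite // !inE !negb_or ![r == _]eq_sym Hji Hki Hjk.
have Hlv : leaf v by move: Hpend; rewrite (negbTE Hpv) orbF.
have [Hjk Hsplit] := leaf_pendant_split Hv Hpv Hlv Hj Hji Hki Hop.
by split; rewrite // !inE !negb_or ![v == _]eq_sym Hji Hki Hjk.
Qed.

Section InternalEdge.
Variables (v i j i' j' : V).
Hypothesis internal : internal_edge par r v.
Hypotheses (Hi : leaf i) (Hi' : leaf i').
Hypothesis top_path : on_path par r (par v) i j && ~~ on_path par r v i j.
Hypothesis bottom_path : on_path par r v i' j' && ~~ on_path par r (par v) i' j'.

Let Hv : v != r. Proof. by case/andP: internal. Qed.

Let sides : [/\ ~~ anc v i, ~~ anc v j, anc v i' & anc v j'].
Proof.
case/andP: top_path => Hop Hn; case/andP: bottom_path => Hop' Hn'.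
by case/andP: (on_path_above_edge Hv Hop Hn) => -> ->;
  case/andP: (on_path_below_edge tree Hv Hop' Hn') => -> ->.
Qed.

Lemma internal_leaves_uniq : uniq [:: i; j; i'; j'].
Proof.
have [Hvi Hvj Hvi' Hvj'] := sides.
move: internal; rewrite /internal_edge /pendant Hv /= negb_or => /andP[Hvl Hpv].
have Hij : i != j.
  apply/eqP => Eij; case/andP: top_path; rewrite -Eij => /(on_path_self tree) Epi _.
  have Hir : i != r by rewrite -Epi.
  by have := leaf_no_child Hi Hir Hv; rewrite Epi eqxx.
have Hi'j' : i' != j'.
  apply/eqP => Eij; case/andP: bottom_path; rewrite -Eij => /(on_path_self tree) Evi _.
  by move: Hvl; rewrite Evi Hi'.
have outside_inside x y : ~~ anc v x -> anc v y -> x != y.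
  by move=> Hx Hy; apply: contraNneq Hx => ->.
by rewrite /= !inE !negb_or Hij Hi'j' !outside_inside.
Qed.

Lemma internal_split_pattern w : w != r ->
  pairs_split (anc w i) (anc w j) (anc w i') (anc w j') = (w == v) /\
  pairs_cross (anc w i) (anc w j) (anc w i') (anc w j') = false.
Proof.
move=> Hw; have [Hvi Hvj Hvi' Hvj'] := sides.
have [Hop Hop'] : on_path par r (par v) i j /\ on_path par r v i' j'.
  by case/andP: top_path; case/andP: bottom_path.
rewrite /pairs_split /pairs_cross; case: (eqVneq w v) => [->|Hwv].
  by rewrite (negbTE Hvi) (negbTE Hvj) Hvi' Hvj'.
case Hvw : (anc v w).
  have [Hwi Hwj] : anc w i = false /\ anc w j = false.
    by split; apply: contraNF (anc_trans Hvw) _.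
  rewrite Hwi Hwj.
  case Hc : (anc w i'); case Hd : (anc w j') => //.
  have Hwv' := on_path_below tree Hop' Hc Hd.
  by rewrite (anc_antisym tree Hwv' Hvw) eqxx in Hwv.
have below_v x : anc v x -> anc w x = anc w v.
  move=> Hx; apply/idP/idP => [Hwx|Hwv']; last exact: anc_trans Hwv' Hx.
  by case/orP: (anc_total Hwx Hx) => // Hvw'; rewrite Hvw' in Hvw.
rewrite (below_v i') // (below_v j') // eqxx andbF; split=> //.
case Hwv' : (anc w v).
  have Hwp := anc_strict Hwv' Hwv.
  by case/orP: (on_path_anc Hop) => /(anc_trans Hwp) ->; case: (anc w i); case: (anc w j).
case Hwi : (anc w i); case Hwj : (anc w j) => //=.
have Hwp := on_path_below tree Hop Hwi Hwj.
by rewrite (anc_trans Hwp (anc_par par v)) in Hwv'.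
Qed.
End InternalEdge.
End EdgeSplits.

(* The transform at A is the total mass; for a Kimura parameter vector it is 0. *)
Lemma fourier_gA (f : grp -> R) : fourier f gA = f gA + f gC + f gG + f gT.
Proof. by rewrite /fourier sum_grp !chr_0g !Rmult_1_l. Qed.

Section EdgeRatios.
Variables (V : finType) (par : V -> V) (r : V).
Hypotheses (tree : is_tree par r) (root_leaf : is_leaf par r r).
Hypothesis three_leaves : (3 <= #|[pred x | is_leaf par r x]|)%N.
Variables (psi : V -> grp -> R) (P : V -> grp -> grp -> R).
Hypothesis psi_sum : forall v, v != r -> psi v gA = - (psi v gC + psi v gG + psi v gT).
Hypothesis P_trans : forall v, v != r -> forall x y, P v x y = trans_fun (psi v) (gadd x y).
Variables (ci cj ck ci' cj' : V -> V).
Hypothesis good : good_choice par r ci cj ck ci' cj'.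

Let fourier_psi_gA v : v != r -> fourier (psi v) gA = 0.
Proof. by move=> Hv; rewrite fourier_gA psi_sum //; ring. Qed.

Let log_ratio3 (g1 g2 g3 : {ffun leafT par r -> grp}) :
  qprob P g1 * qprob P g2 / qprob P g3 =
  exp (\big[Rplus/0]_(w | w != r) (fourier (psi w) (leaf_sum g1 w)
        + fourier (psi w) (leaf_sum g2 w) - fourier (psi w) (leaf_sum g3 w))).
Proof.
rewrite !(hendy_formula tree P_trans) /Rdiv -exp_Ropp -!exp_plus; congr exp.
by rewrite !big_split /= -(big_morph Ropp Ropp_plus_distr Ropp_0).
Qed.

Let log_ratio4 (g1 g2 g3 g4 : {ffun leafT par r -> grp}) :
  qprob P g1 * qprob P g2 / (qprob P g3 * qprob P g4) =
  exp (\big[Rplus/0]_(w | w != r) (fourier (psi w) (leaf_sum g1 w)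
        + fourier (psi w) (leaf_sum g2 w) - fourier (psi w) (leaf_sum g3 w)
        - fourier (psi w) (leaf_sum g4 w))).
Proof.
rewrite !(hendy_formula tree P_trans) /Rdiv Rinv_mult -!exp_Ropp -!exp_plus; congr exp.
by rewrite !big_split /= -!(big_morph Ropp Ropp_plus_distr Ropp_0); ring.
Qed.

(* All edge contributions cancel except that of e itself. *)
Lemma R_edge_exp v h : v != r ->
  R_edge par r P ci cj ck ci' cj' v h = exp (2 * fourier (psi v) h).
Proof.
move=> Hv; rewrite /R_edge; case: good => good_pend good_int.
case: ifP => Hpend.
  have [Hj Hk Hji Hki Hop] := good_pend v Hpend.
  have [Hi Huniq Hsplit] := pendant_split tree root_leaf Hpend Hj Hk Hji Hki Hop three_leaves.
  rewrite /R_pend log_ratio3 (bigD1 v) //= big1 ?Rplus_0_r.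
    by rewrite !leaf_sum_col3 // three_leaf_term ?fourier_psi_gA // Hsplit // eqxx.
  move=> w /andP[Hw Hwv].
  by rewrite !leaf_sum_col3 // three_leaf_term ?fourier_psi_gA // Hsplit // (negbTE Hwv).
have Hint : internal_edge par r v by rewrite /internal_edge Hv Hpend.
have [/andP[Hi Hj] /andP[Hi' Hj'] Htop Hbot] := good_int v Hint.
have Huniq := internal_leaves_uniq tree Hint Hi Hi' Htop Hbot.
rewrite /R_int log_ratio4 (bigD1 v) //= big1 ?Rplus_0_r.
  rewrite !leaf_sum_col4 // four_leaf_term ?fourier_psi_gA //.
  by have [-> _] := internal_split_pattern tree Hint Htop Hbot Hv; rewrite eqxx.
move=> w /andP[Hw Hwv]; rewrite !leaf_sum_col4 // four_leaf_term ?fourier_psi_gA //.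
by have [-> ->] := internal_split_pattern tree Hint Htop Hbot Hw; rewrite (negbTE Hwv).
Qed.
End EdgeRatios.

Lemma exp_le_iff a b : exp a <= exp b <-> a <= b.
Proof.
split=> [H|]; first by apply: Rnot_lt_le => /exp_increasing; lra.
by case=> [/exp_increasing|->]; lra.
Qed.

(* For Kimura 3-parameter rates f, the three ratio inequalities say exactly
   that f C, f G, f T are non-negative: with f A = -(f C + f G + f T) one has
   fourier f C = -2 (f C + f T), fourier f G = -2 (f G + f T) and
   fourier f T = -2 (f C + f G). *)
Lemma kimura_criterion (f : grp -> R) : f gA = - (f gC + f gG + f gT) ->
  let Rf h := exp (2 * fourier f h) in
  (Rf gC * Rf gT <= Rf gG <-> 0 <= f gC) /\
  (Rf gG * Rf gT <= Rf gC <-> 0 <= f gG) /\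
  (Rf gC * Rf gG <= Rf gT <-> 0 <= f gT).
Proof.
move=> Hf Rf; rewrite /Rf -!exp_plus !exp_le_iff /fourier !sum_grp Hf.
by rewrite /chr /gA /gC /gG /gT /=; split; [|split]; split; lra.
Qed.

Theorem mainTheorem8
  (V : finType) (par : V -> V) (r : V)
  (psi : V -> grp -> R) (P : V -> grp -> grp -> R)
  (ci cj ck ci' cj' : V -> V) :
  is_tree par r ->
  is_leaf par r r ->
  (3 <= #|[pred x | is_leaf par r x]|)%N ->
  (forall v, ~~ is_leaf par r v -> (3 <= deg par r v)%N) ->
  (forall v, v != r -> psi v gA = - (psi v gC + psi v gG + psi v gT)) ->
  (forall v, v != r -> IsMatExp (Qmat (psi v)) (P v)) ->
  good_choice par r ci cj ck ci' cj' ->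
  let Re := R_edge par r P ci cj ck ci' cj' in
  ((forall v, v != r ->
      0 <= psi v gC /\ 0 <= psi v gG /\ 0 <= psi v gT) <->
   (forall v, v != r ->
      Re v gC * Re v gT <= Re v gG /\
      Re v gG * Re v gT <= Re v gC /\
      Re v gC * Re v gG <= Re v gT)) /\
  (forall v, v != r ->
      (Re v gC * Re v gT <= Re v gG <-> 0 <= psi v gC) /\
      (Re v gG * Re v gT <= Re v gC <-> 0 <= psi v gG) /\
      (Re v gC * Re v gG <= Re v gT <-> 0 <= psi v gT)).
Proof.
move=> tree root_leaf three_leaves _ psi_sum P_exp good Re.
have P_trans v : v != r -> forall x y, P v x y = trans_fun (psi v) (gadd x y).
  by move=> Hv; apply/matexp_fourier/P_exp.
have per_edge v : v != r ->
    (Re v gC * Re v gT <= Re v gG <-> 0 <= psi v gC) /\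
    (Re v gG * Re v gT <= Re v gC <-> 0 <= psi v gG) /\
    (Re v gC * Re v gG <= Re v gT <-> 0 <= psi v gT).
  move=> Hv; rewrite /Re !(R_edge_exp tree root_leaf three_leaves psi_sum P_trans good _ Hv).
  exact: kimura_criterion (psi_sum v Hv).
split=> //; split=> H v Hv; have [E1 [E2 E3]] := per_edge v Hv; have [H1 [H2 H3]] := H v Hv.
- by rewrite E1 E2 E3.
- by rewrite -E1 -E2 -E3.
Qed.
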